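(* For $0<s<1$ let $\varphi_s(z)=sz+(1-s)$ and $C_{\varphi_s}$ the composition operator $f\mapsto f\circ\varphi_s$ on $H^2(\mathbb{D})$. The unital C$^*$-algebra $C^*(\{C_{\varphi_s}:0<s<1\})$ is irreducible; that is, its commutant in $\mathcal{B}(H^2(\mathbb{D}))$ consists only of scalar multiples of the identity.
   Context: $H^2(\mathbb{D})$ is the Hardy space of the unit disk: analytic $f(z)=\sum a_nz^n$ with $\sum|a_n|^2<\infty$. *)

From Stdlib Require Import Reals.
Open Scope R_scope.

Record Cx := mkC { re : R ; im : R }.

Definition Cadd (z w : Cx) : Cx := mkC (re z + re w) (im z + im w).
Definition Cmul (z w : Cx) : Cx :=
  mkC (re z * re w - im z * im w) (re z * im w + im z * re w).
Definition Cconj (z : Cx) : Cx := mkC (re z) (- im z).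
Definition Cnorm2 (z : Cx) : R := re z * re z + im z * im z.
Definition RtoC (x : R) : Cx := mkC x 0.
Definition C0 : Cx := mkC 0 0.
Definition C1 : Cx := mkC 1 0.
Fixpoint Cpow (z : Cx) (n : nat) : Cx :=
  match n with O => C1 | S k => Cmul z (Cpow z k) end.

Definition Csum (u : nat -> Cx) (w : Cx) : Prop :=
  infinite_sum (fun n => re (u n)) (re w) /\
  infinite_sum (fun n => im (u n)) (im w).

(** H^2(D) as coefficient sequences a with sum |a_n|^2 < oo. *)
Definition seqC := nat -> Cx.
Definition inH2 (a : seqC) : Prop := exists l, infinite_sum (fun n => Cnorm2 (a n)) l.
Definition H2norm2_is (a : seqC) (l : R) : Prop := infinite_sum (fun n => Cnorm2 (a n)) l.

Definition H2inner_is (a b : seqC) (z : Cx) : Prop :=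
  Csum (fun n => Cmul (a n) (Cconj (b n))) z.

Definition evalH2_is (a : seqC) (z w : Cx) : Prop :=
  Csum (fun n => Cmul (a n) (Cpow z n)) w.

Definition phi (s : R) (z : Cx) : Cx := Cadd (Cmul (RtoC s) z) (RtoC (1 - s)).

Definition compIs (s : R) (a b : seqC) : Prop :=
  inH2 b /\
  forall z : Cx, Cnorm2 z < 1 ->
    exists w, evalH2_is b z w /\ evalH2_is a (phi s z) w.

(** Bounded linear operators on H^2 (represented on sequences; only their
    behaviour on H^2 matters). *)
Definition bounded_op (T : seqC -> seqC) : Prop :=
  (forall a, inH2 a -> inH2 (T a)) /\
  (forall a b, inH2 a -> inH2 b -> forall n,
      T (fun k => Cadd (a k) (b k)) n = Cadd (T a n) (T b n)) /\
  (forall (c : Cx) a, inH2 a -> forall n,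
      T (fun k => Cmul c (a k)) n = Cmul c (T a n)) /\
  (exists M, forall a la lTa, inH2 a -> H2norm2_is a la -> H2norm2_is (T a) lTa ->
      lTa <= M * la).

Definition is_comp_adjoint (s : R) (A : seqC -> seqC) : Prop :=
  bounded_op A /\
  forall a b c z, inH2 a -> inH2 c -> compIs s a b ->
    H2inner_is b c z -> H2inner_is a (A c) z.

Definition commutes_comp (s : R) (T : seqC -> seqC) : Prop :=
  forall a b, inH2 a -> compIs s a b -> compIs s (T a) (T b).

Definition commutes_op (T A : seqC -> seqC) : Prop :=
  forall a, inH2 a -> forall n, T (A a) n = A (T a) n.

From Pilot Require Import Defs.
From Stdlib Require Import Reals.
From Stdlib Require Import Lra Lia Psatz FunctionalExtensionality.
Open Scope R_scope.

(** Coefficientwise, C_{phi_s} maps a to b with b_m = sum_n a_n B_s(n,m), where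
    B_s(n,m) is the coefficient of y^m in (s y + 1 - s)^n.  This matrix is
    nonnegative, has row sums 1 and column sums at most 1/s, so that
    (Adj_s c)_n = sum_{m<=n} B_s(n,m) c_m defines a bounded operator on H^2; a
    Fubini argument for double series shows it is the adjoint of C_{phi_s}.

    Let T commute with every C_{phi_s} and every adjoint, and put
    lam = (T 1)(0).  (1) C_{phi_s} 1 = 1 forces (T 1)(1-s) = (T 1)(0) for all s,
    so T 1 = lam by the identity theorem for power series on (0,1).
    (2) Adj_{1-t} 1 is the reproducing kernel k_t = (t^n)_n, whence
    T k_t = Adj_{1-t} (T 1) = lam k_t.  (3) Expanding T k_t along the basis,
    sum_m t^m (T e_m)_p = lam t^p for all t in (0,1), so (T e_m)_p = lam [m = p].
    (4) Every bounded operator is determined by its matrix, hence T = lam. *)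

Lemma lim_le_eventually (u : nat -> R) l K N0 :
  Un_cv u l -> (forall n, (N0 <= n)%nat -> u n <= K) -> l <= K.
Proof.
  intros Hu HK. destruct (Rle_dec l K) as [h|h]; auto.
  exfalso. destruct (Hu (l - K)) as [N HN]; [lra|].
  specialize (HN (max N N0) ltac:(lia)). specialize (HK (max N N0) ltac:(lia)).
  unfold Rdist in HN. apply Rabs_def2 in HN. lra.
Qed.

Lemma lim_ge_eventually (u : nat -> R) l K N0 :
  Un_cv u l -> (forall n, (N0 <= n)%nat -> K <= u n) -> K <= l.
Proof.
  intros Hu HK. destruct (Rle_dec K l) as [h|h]; auto.
  exfalso. destruct (Hu (K - l)) as [N HN]; [lra|].
  specialize (HN (max N N0) ltac:(lia)). specialize (HK (max N N0) ltac:(lia)).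
  unfold Rdist in HN. apply Rabs_def2 in HN. lra.
Qed.

Lemma lim_le (u : nat -> R) l K : Un_cv u l -> (forall n, u n <= K) -> l <= K.
Proof. intros H1 H2. apply (lim_le_eventually u l K 0); auto. Qed.

Lemma Rabs_le_bounds x a : Rabs x <= a -> - a <= x <= a.
Proof. intro H. pose proof (Rle_abs x). pose proof (Rle_abs (- x)). rewrite Rabs_Ropp in *. lra. Qed.

Lemma CV_const (c : R) : Un_cv (fun _ => c) c.
Proof. intros eps He. exists O. intros. unfold Rdist. rewrite Rminus_diag, Rabs_R0. lra. Qed.

Lemma infinite_sum_ext f g l :
  (forall n, f n = g n) -> infinite_sum f l -> infinite_sum g l.
Proof. intros E H. replace g with f; auto. apply functional_extensionality; auto. Qed.

Lemma infinite_sum_scal f l c :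
  infinite_sum f l -> infinite_sum (fun n => f n * c) (l * c).
Proof.
  intros H eps He. destruct (CV_mult _ _ _ _ H (CV_const c) eps He) as [N HN].
  exists N. intros n Hn. specialize (HN n Hn).
  replace (sum_f_R0 (fun n => f n * c) n) with (sum_f_R0 f n * c)
    by (rewrite Rmult_comm, scal_sum; reflexivity).
  exact HN.
Qed.

Lemma infinite_sum_plus f g l1 l2 : infinite_sum f l1 -> infinite_sum g l2 ->
  infinite_sum (fun n => f n + g n) (l1 + l2).
Proof.
  intros H1 H2 eps He. destruct (CV_plus _ _ _ _ H1 H2 eps He) as [N HN].
  exists N. intros n Hn. rewrite plus_sum. apply HN; auto.
Qed.

Lemma infinite_sum_minus f g l1 l2 : infinite_sum f l1 -> infinite_sum g l2 ->
  infinite_sum (fun n => f n - g n) (l1 - l2).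
Proof.
  intros H1 H2 eps He. destruct (CV_minus _ _ _ _ H1 H2 eps He) as [N HN].
  exists N. intros n Hn. rewrite minus_sum. apply HN; auto.
Qed.

Lemma nonneg_series_cv (f : nat -> R) K :
  (forall n, 0 <= f n) -> (forall N, sum_f_R0 f N <= K) ->
  {l | infinite_sum f l /\ l <= K}.
Proof.
  intros H0 HK.
  destruct (growing_cv (sum_f_R0 f)) as [l Hl].
  - intro n. rewrite tech5. specialize (H0 (S n)). lra.
  - exists K. intros x [i ->]. apply HK.
  - exists l. split; [exact Hl|]. apply (lim_le _ _ _ Hl HK).
Qed.

Lemma series_cv_dominated (f g : nat -> R) L :
  (forall n, Rabs (f n) <= g n) -> infinite_sum g L -> {l | infinite_sum f l}.
Proof.
  intros Hfg Hg.
  assert (Hg0 : forall n, 0 <= g n).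
  { intro n. specialize (Hfg n). pose proof (Rabs_pos (f n)). lra. }
  destruct (nonneg_series_cv (fun n => Rabs (f n)) L) as [l [Hl _]].
  - intro; apply Rabs_pos.
  - intro N. apply Rle_trans with (sum_f_R0 g N).
    + apply sum_Rle. intros; apply Hfg.
    + apply sum_incr; auto.
  - apply cv_cauchy_2. apply cauchy_abs. apply cv_cauchy_1. exists l. exact Hl.
Qed.

Lemma series_eventually_const (h : nat -> R) c N :
  (forall K, (N <= K)%nat -> sum_f_R0 h K = c) -> infinite_sum h c.
Proof.
  intros H eps He. exists N. intros n Hn. rewrite H by lia. unfold Rdist.
  rewrite Rminus_diag, Rabs_R0. lra.
Qed.

Lemma sum_support (f : nat -> R) n K :
  (forall m, (n < m)%nat -> f m = 0) -> (n <= K)%nat -> sum_f_R0 f K = sum_f_R0 f n.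
Proof.
  intros Hf HK. induction K as [|K IH].
  - assert (n = O) by lia. subst. reflexivity.
  - destruct (Nat.eq_dec n (S K)) as [->|h]; [reflexivity|].
    rewrite tech5, IH by lia. rewrite Hf by lia. ring.
Qed.

Lemma series_single p c : infinite_sum (fun n => if Nat.eqb n p then c else 0) c.
Proof.
  apply (series_eventually_const _ _ p). intros K HK. rewrite (sum_support _ p K); auto.
  - destruct p as [|p]; [simpl; reflexivity|]. rewrite tech5, Nat.eqb_refl.
    rewrite sum_eq_R0; [ring|]. intros n Hn. destruct (Nat.eqb_spec n (S p)); [lia|reflexivity].
  - intros m Hm. destruct (Nat.eqb_spec m p); [lia|reflexivity].
Qed.

Lemma sum_shift (f : nat -> R) K :
  sum_f_R0 f (S K) = f O + sum_f_R0 (fun i => f (S i)) K.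
Proof. rewrite decomp_sum by lia. reflexivity. Qed.

Lemma sum_swap (u : nat -> nat -> R) N M :
  sum_f_R0 (fun n => sum_f_R0 (fun m => u n m) M) N =
  sum_f_R0 (fun m => sum_f_R0 (fun n => u n m) N) M.
Proof.
  induction N as [|N IH]; [reflexivity|].
  rewrite tech5, IH, <- plus_sum. apply sum_eq. intros. rewrite tech5. reflexivity.
Qed.

Lemma sum_mono (f : nat -> R) a b : (forall n, 0 <= f n) -> (a <= b)%nat ->
  sum_f_R0 f a <= sum_f_R0 f b.
Proof.
  intros Hf Hab. induction Hab; [lra|]. rewrite tech5. specialize (Hf (S m)). lra.
Qed.

Lemma sum_lim (w : nat -> nat -> R) (v : nat -> R) M :
  (forall m, Un_cv (fun N => w N m) (v m)) ->
  Un_cv (fun N => sum_f_R0 (fun m => w N m) M) (sum_f_R0 v M).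
Proof.
  intro H. induction M as [|M IH]; [exact (H O)|].
  exact (CV_plus _ _ _ _ IH (H (S M))).
Qed.

Lemma geom_bound q N : 0 < q < 1 -> sum_f_R0 (fun n => q ^ n) N <= / (1 - q).
Proof.
  intro Hq. pose proof (GP_finite q N). pose proof (pow_lt q (N + 1) ltac:(lra)).
  apply Rmult_le_reg_r with (1 - q); [lra|]. rewrite Rinv_l by lra. nra.
Qed.

Lemma weighted_cauchy_schwarz (w x : nat -> R) K :
  (forall i, 0 <= w i) ->
  (sum_f_R0 (fun i => w i * x i) K) ^ 2 <=
  sum_f_R0 w K * sum_f_R0 (fun i => w i * x i ^ 2) K.
Proof.
  intro Hw. induction K as [|K IH].
  - simpl. pose proof (Hw O). nra.
  - rewrite !tech5.
    set (X := sum_f_R0 (fun i => w i * x i) K) in *.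
    set (W := sum_f_R0 w K) in *.
    set (Q := sum_f_R0 (fun i => w i * x i ^ 2) K) in *.
    assert (HW : 0 <= W) by (apply cond_pos_sum; auto).
    assert (HQ : 0 <= Q).
    { apply cond_pos_sum. intro i. apply Rmult_le_pos; auto. apply pow2_ge_0. }
    set (a := w (S K)). set (y := x (S K)).
    assert (Ha : 0 <= a) by apply Hw.
    assert (key : 2 * X * y <= W * y ^ 2 + Q).
    { assert (E : (W * y ^ 2 + Q) ^ 2 - (2 * X * y) ^ 2 =
                  (W * y ^ 2 - Q) ^ 2 + 4 * y ^ 2 * (W * Q - X ^ 2)) by ring.
      pose proof (pow2_ge_0 y). pose proof (pow2_ge_0 (W * y ^ 2 - Q)).
      assert (0 <= 4 * y ^ 2 * (W * Q - X ^ 2)) by (apply Rmult_le_pos; lra).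
      assert (0 <= W * y ^ 2 + Q) by nra.
      nra. }
    nra.
Qed.

(** ** Identity theorem for power series on (0,1) *)

Lemma ps_tail_bound (d : nat -> R) D x n :
  0 <= D -> 0 < x < 1 ->
  (forall m, Rabs (d m) <= D) -> (forall j, (j < n)%nat -> d j = 0) ->
  forall k, Rabs (sum_f_R0 (fun m => d m * x ^ m) (n + k) - d n * x ^ n)
            + D * x ^ (n + k + 1) / (1 - x) <= D * x ^ (n + 1) / (1 - x).
Proof.
  intros HD Hx Hd Hz k. induction k as [|k IH].
  - rewrite Nat.add_0_r.
    assert (E : sum_f_R0 (fun m => d m * x ^ m) n = d n * x ^ n).
    { destruct n as [|n']; [simpl; ring|]. rewrite tech5.
      rewrite sum_eq_R0; [ring|]. intros j Hj. rewrite Hz; [ring|lia]. }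
    rewrite E, Rminus_diag, Rabs_R0. lra.
  - replace (n + S k)%nat with (S (n + k)) by lia. rewrite tech5.
    set (P := sum_f_R0 (fun m => d m * x ^ m) (n + k)) in *.
    assert (H1 : Rabs (P + d (S (n + k)) * x ^ S (n + k) - d n * x ^ n)
                 <= Rabs (P - d n * x ^ n) + D * x ^ S (n + k)).
    { replace (P + d (S (n + k)) * x ^ S (n + k) - d n * x ^ n)
        with ((P - d n * x ^ n) + d (S (n + k)) * x ^ S (n + k)) by ring.
      eapply Rle_trans; [apply Rabs_triang|]. apply Rplus_le_compat_l.
      rewrite Rabs_mult, (Rabs_right (x ^ _)) by (apply Rle_ge, pow_le; lra).
      apply Rmult_le_compat_r; [apply pow_le; lra| apply Hd]. }
    assert (H2 : D * x ^ (S (n + k) + 1) / (1 - x) + D * x ^ S (n + k)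
                 = D * x ^ (n + k + 1) / (1 - x)).
    { replace (S (n + k) + 1)%nat with (S (n + k + 1)) by lia.
      replace (S (n + k)) with (n + k + 1)%nat by lia. simpl. field. lra. }
    lra.
Qed.

Lemma ps_leading_coeff_bound (d : nat -> R) D x n :
  0 <= D -> 0 < x < 1 -> (forall m, Rabs (d m) <= D) ->
  (forall j, (j < n)%nat -> d j = 0) ->
  infinite_sum (fun m => d m * x ^ m) 0 ->
  Rabs (d n) * x ^ n <= D * x ^ (n + 1) / (1 - x).
Proof.
  intros HD Hx Hd Hz Hs.
  destruct (Rle_dec (Rabs (d n) * x ^ n) (D * x ^ (n + 1) / (1 - x))) as [h|h]; auto.
  exfalso.
  destruct (Hs (Rabs (d n) * x ^ n - D * x ^ (n + 1) / (1 - x))) as [N HN]; [lra|].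
  specialize (HN (n + N)%nat ltac:(lia)). unfold Rdist in HN. rewrite Rminus_0_r in HN.
  pose proof (ps_tail_bound d D x n HD Hx Hd Hz N) as HT.
  assert (HT2 : 0 <= D * x ^ (n + N + 1) / (1 - x)).
  { apply Rmult_le_pos; [apply Rmult_le_pos; [lra|apply pow_le; lra]|].
    apply Rlt_le, Rinv_0_lt_compat; lra. }
  pose proof (Rabs_triang_inv (d n * x ^ n) (sum_f_R0 (fun m => d m * x ^ m) (n + N))) as HR.
  rewrite Rabs_mult, (Rabs_right (x ^ n)) in HR by (apply Rle_ge, pow_le; lra).
  rewrite Rabs_minus_sym in HT. lra.
Qed.

Lemma ps_unique (d : nat -> R) D :
  (forall n, Rabs (d n) <= D) ->
  (forall x, 0 < x < 1 -> infinite_sum (fun n => d n * x ^ n) 0) ->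
  forall n, d n = 0.
Proof.
  intros Hd Hs.
  assert (HD : 0 <= D) by (eapply Rle_trans; [apply Rabs_pos|apply (Hd O)]).
  intro n. induction n as [n IH] using (well_founded_induction Wf_nat.lt_wf).
  destruct (Req_dec (d n) 0) as [h|h]; auto. exfalso.
  pose proof (Rabs_pos_lt _ h) as Hp. pose proof (Hd n) as Hdn.
  set (a := Rabs (d n)) in *.
  (* x = a / (2 (D + a)) is small enough to make the tail smaller than a x^n *)
  set (x := a / (2 * (D + a))).
  assert (Hx : 0 < x < 1 / 2).
  { unfold x. split; [apply Rdiv_lt_0_compat; lra|].
    apply Rmult_lt_reg_r with (2 * (D + a)); [lra|].
    replace (a / (2 * (D + a)) * (2 * (D + a))) with a by (field; lra). lra. }
  pose proof (ps_leading_coeff_bound d D x n HD ltac:(lra) Hd IH (Hs x ltac:(lra))) as Hb.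
  assert (Hxn : 0 < x ^ n) by (apply pow_lt; lra).
  rewrite pow_add, pow_1 in Hb.
  assert (Hb2 : a * (1 - x) <= D * x).
  { apply Rmult_le_reg_r with (x ^ n / (1 - x)).
    { apply Rdiv_lt_0_compat; lra. }
    replace (a * (1 - x) * (x ^ n / (1 - x))) with (a * x ^ n) by (field; lra).
    replace (D * x * (x ^ n / (1 - x))) with (D * (x ^ n * x) / (1 - x)) by (field; lra).
    exact Hb. }
  assert (Hax : a = 2 * (D + a) * x) by (unfold x; field; lra).
  nra.
Qed.

(** ** The coefficient matrix of C_{phi_s} *)

(** B s n m is the coefficient of y^m in (s y + 1 - s)^n (Pascal-type recursion). *)
Fixpoint B (s : R) (n m : nat) : R :=
  match n, m with
  | O, O => 1
  | O, S _ => 0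
  | S n', O => (1 - s) * B s n' O
  | S n', S m' => s * B s n' m' + (1 - s) * B s n' (S m')
  end.

Lemma B_nonneg s n m : 0 <= s <= 1 -> 0 <= B s n m.
Proof.
  intro Hs. revert m. induction n as [|n IH]; intros [|m]; simpl; try lra.
  - apply Rmult_le_pos; [lra|apply IH].
  - apply Rplus_le_le_0_compat; apply Rmult_le_pos; try lra; apply IH.
Qed.

Lemma B_zero s n m : (n < m)%nat -> B s n m = 0.
Proof.
  revert m. induction n as [|n IH]; intros [|m] H; simpl; try lia; try reflexivity.
  rewrite !IH by lia. ring.
Qed.

Lemma B_first_column s n : B s n 0 = (1 - s) ^ n.
Proof. induction n; simpl; [reflexivity|rewrite IHn; ring]. Qed.

Lemma B_row s y n K : (n <= K)%nat ->
  sum_f_R0 (fun m => B s n m * y ^ m) K = (s * y + (1 - s)) ^ n.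
Proof.
  revert K. induction n as [|n IH]; intros K HK.
  - destruct K as [|K]; [simpl; ring|]. rewrite sum_shift.
    rewrite sum_eq_R0; [simpl; ring|]. intros; simpl; ring.
  - destruct K as [|K]; [lia|]. rewrite sum_shift.
    assert (E : sum_f_R0 (fun i => B s (S n) (S i) * y ^ (S i)) K =
      s * y * sum_f_R0 (fun i => B s n i * y ^ i) K
      + (1 - s) * sum_f_R0 (fun i => B s n (S i) * y ^ (S i)) K).
    { rewrite !scal_sum, <- plus_sum; apply sum_eq; intros; simpl; ring. }
    pose proof (IH (S K) ltac:(lia)) as H1. rewrite sum_shift in H1.
    rewrite E, (IH K) by lia. simpl B at 1. simpl pow in *. rewrite <- H1. ring.
Qed.

Lemma B_row_sum s n K : (n <= K)%nat -> sum_f_R0 (fun m => B s n m) K = 1.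
Proof.
  intro H. transitivity (sum_f_R0 (fun m => B s n m * 1 ^ m) K).
  - apply sum_eq. intros; rewrite pow1; ring.
  - rewrite B_row by auto. replace (s * 1 + (1 - s)) with 1 by ring. apply pow1.
Qed.

(** Column sums are at most 1/s; this is what makes C_{phi_s} bounded. *)
Lemma B_column_sum s N m : 0 < s < 1 -> s * sum_f_R0 (fun n => B s n m) N <= 1.
Proof.
  intro Hs. revert m. induction N as [|N IH]; intros m.
  - simpl. destruct m; simpl; lra.
  - rewrite sum_shift. destruct m as [|m].
    + replace (sum_f_R0 (fun i => B s (S i) 0) N) with ((1 - s) * sum_f_R0 (fun i => B s i 0) N)
        by (rewrite scal_sum; apply sum_eq; intros; simpl; ring).
      specialize (IH O). simpl B. nra.
    + replace (sum_f_R0 (fun i => B s (S i) (S m)) N) with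
        (s * sum_f_R0 (fun i => B s i m) N + (1 - s) * sum_f_R0 (fun i => B s i (S m)) N)
        by (rewrite !scal_sum, <- plus_sum; apply sum_eq; intros; simpl; ring).
      pose proof (IH m). pose proof (IH (S m)). simpl B. nra.
Qed.

Definition AdjR (s : R) (y : nat -> R) (n : nat) : R :=
  sum_f_R0 (fun m => B s n m * y m) n.

Lemma AdjR_supported_at_0 s y n :
  (forall m, (0 < m)%nat -> y m = 0) -> AdjR s y n = (1 - s) ^ n * y O.
Proof.
  intro H. unfold AdjR. rewrite (sum_support _ 0 n), <- B_first_column; [reflexivity| |lia].
  intros m Hm. rewrite H by lia. ring.
Qed.

Lemma AdjR_l2 s y N : 0 < s < 1 ->
  sum_f_R0 (fun n => (AdjR s y n) ^ 2) N <= / s * sum_f_R0 (fun m => y m ^ 2) N.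
Proof.
  intro Hs.
  assert (Hrow : forall n, (n <= N)%nat ->
            (AdjR s y n) ^ 2 <= sum_f_R0 (fun m => B s n m * y m ^ 2) N).
  { intros n Hn. unfold AdjR.
    eapply Rle_trans; [apply weighted_cauchy_schwarz; intro; apply B_nonneg; lra|].
    rewrite B_row_sum, Rmult_1_l by lia.
    right. symmetry. apply sum_support; auto. intros m Hm. rewrite B_zero by lia. ring. }
  apply Rle_trans with (sum_f_R0 (fun n => sum_f_R0 (fun m => B s n m * y m ^ 2) N) N).
  - apply sum_Rle. exact Hrow.
  - rewrite sum_swap, scal_sum. apply sum_Rle. intros m _.
    replace (sum_f_R0 (fun n => B s n m * y m ^ 2) N) with
      (y m ^ 2 * sum_f_R0 (fun n => B s n m) N) by (rewrite scal_sum; apply sum_eq; intros; ring).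
    pose proof (B_column_sum s N m Hs). pose proof (pow2_ge_0 (y m)).
    apply Rmult_le_reg_l with s; [lra|].
    replace (s * (y m ^ 2 * / s)) with (y m ^ 2) by (field; lra). nra.
Qed.

(** ** Interchanging a lower-triangular double series *)

Section TriangularFubini.

Variables (u : nat -> nat -> R) (v : nat -> R) (R0 : R).
Hypothesis u_lower : forall n m, (n < m)%nat -> u n m = 0.
Hypothesis u_abs_rows : infinite_sum (fun n => sum_f_R0 (fun m => Rabs (u n m)) n) R0.
Hypothesis u_columns : forall m, infinite_sum (fun n => u n m) (v m).

Let row (n : nat) : R := sum_f_R0 (fun m => u n m) n.
Let arow (n : nat) : R := sum_f_R0 (fun m => Rabs (u n m)) n.

Let arow_nonneg n : 0 <= arow n.
Proof. apply cond_pos_sum. intro; apply Rabs_pos. Qed.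

(** Summing the first M+1 columns instead of the first M+1 rows only misses
    entries of rows beyond M, whose absolute sum is the tail R0 - sum arow. *)
Lemma columns_minus_rows M :
  Rabs (sum_f_R0 v M - sum_f_R0 row M) <= R0 - sum_f_R0 arow M.
Proof.
  set (g := fun n => sum_f_R0 (fun m => u n m) M).
  assert (Hg : forall n, (n <= M)%nat -> g n = row n).
  { intros n Hn. apply sum_support; auto. }
  assert (Hg2 : forall n, Rabs (g n) <= arow n).
  { intro n. eapply Rle_trans; [apply Rsum_abs|].
    destruct (Compare_dec.le_lt_dec M n).
    - apply sum_mono; auto. intro; apply Rabs_pos.
    - right. apply sum_support; [|lia]. intros m Hm. rewrite u_lower by lia. apply Rabs_R0. }
  assert (Hlim : Un_cv (fun N => sum_f_R0 g N - sum_f_R0 row M) (sum_f_R0 v M - sum_f_R0 row M)).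
  { apply CV_minus; [|apply CV_const].
    intros eps Heps.
    destruct (sum_lim (fun N m => sum_f_R0 (fun n => u n m) N) v M u_columns eps Heps) as [N HN].
    exists N. intros n Hn. unfold g. rewrite sum_swap. apply HN; auto. }
  assert (Bd : forall k, Rabs (sum_f_R0 g (M + k) - sum_f_R0 row M)
                         <= sum_f_R0 arow (M + k) - sum_f_R0 arow M).
  { induction k as [|k IH].
    - rewrite Nat.add_0_r, (sum_eq g row M), Rminus_diag, Rminus_diag, Rabs_R0 by auto. lra.
    - replace (M + S k)%nat with (S (M + k)) by lia. rewrite !tech5.
      pose proof (Hg2 (S (M + k))).
      replace (sum_f_R0 g (M + k) + g (S (M + k)) - sum_f_R0 row M) with
        ((sum_f_R0 g (M + k) - sum_f_R0 row M) + g (S (M + k))) by ring.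
      eapply Rle_trans; [apply Rabs_triang|]. lra. }
  assert (Bd' : forall N, (M <= N)%nat ->
      Rabs (sum_f_R0 g N - sum_f_R0 row M) <= R0 - sum_f_R0 arow M).
  { intros N HN. replace N with (M + (N - M))%nat by lia.
    pose proof (sum_incr arow (M + (N - M)) R0 u_abs_rows arow_nonneg). specialize (Bd (N - M)%nat).
    lra. }
  apply Rabs_le. split.
  - apply (lim_ge_eventually _ _ _ M Hlim). intros n Hn.
    specialize (Bd' n Hn). apply Rabs_le_bounds in Bd'. lra.
  - apply (lim_le_eventually _ _ _ M Hlim). intros n Hn.
    specialize (Bd' n Hn). apply Rabs_le_bounds in Bd'. lra.
Qed.

Lemma triangular_fubini :
  exists S, infinite_sum row S /\ infinite_sum v S.
Proof.
  destruct (series_cv_dominated row arow R0) as [S HS].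
  { intro n. apply Rsum_abs. }
  { exact u_abs_rows. }
  exists S. split; [exact HS|].
  intros eps Heps.
  destruct (HS (eps / 2)) as [N1 HN1]; [lra|].
  destruct (u_abs_rows (eps / 2)) as [N2 HN2]; [lra|].
  exists (max N1 N2). intros n Hn.
  specialize (HN1 n ltac:(lia)). specialize (HN2 n ltac:(lia)).
  pose proof (columns_minus_rows n) as Key. unfold Rdist in *.
  pose proof (sum_incr arow n R0 u_abs_rows arow_nonneg).
  apply Rabs_def2 in HN1. apply Rabs_def2 in HN2. apply Rabs_le_bounds in Key.
  change (sum_f_R0 (fun n => sum_f_R0 (fun m => Rabs (u n m)) n) n) with (sum_f_R0 arow n) in HN2.
  apply Rabs_def1; lra.
Qed.

End TriangularFubini.

Lemma column_cv s (a : nat -> R) K : 0 < s < 1 -> (forall n, Rabs (a n) <= K) ->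
  forall m, {l | infinite_sum (fun n => a n * B s n m) l /\ Rabs l <= K / s}.
Proof.
  intros Hs Ha m.
  assert (HK : 0 <= K) by (eapply Rle_trans; [apply Rabs_pos|apply (Ha O)]).
  assert (Hcol : forall N, sum_f_R0 (fun n => K * B s n m) N <= K / s).
  { intro N.
    replace (sum_f_R0 (fun n => K * B s n m) N) with (K * sum_f_R0 (fun n => B s n m) N)
      by (rewrite scal_sum; apply sum_eq; intros; ring).
    pose proof (B_column_sum s N m Hs).
    apply Rmult_le_reg_l with s; [lra|].
    replace (s * (K / s)) with K by (field; lra).
    replace (s * (K * sum_f_R0 (fun i => B s i m) N))
      with (K * (s * sum_f_R0 (fun i => B s i m) N)) by ring.
    nra. }
  destruct (nonneg_series_cv (fun n => K * B s n m) (K / s)) as [L [HL _]]; [|exact Hcol|].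
  { intro n. apply Rmult_le_pos; auto. apply B_nonneg; lra. }
  assert (Hab : forall n, Rabs (a n * B s n m) <= K * B s n m).
  { intro n. rewrite Rabs_mult, (Rabs_right (B s n m)) by (apply Rle_ge, B_nonneg; lra).
    apply Rmult_le_compat_r; [apply B_nonneg; lra|apply Ha]. }
  destruct (series_cv_dominated _ _ L Hab HL) as [l Hl].
  exists l. split; auto.
  apply (lim_le _ _ _ (cv_cvabs _ _ Hl)). intro N.
  eapply Rle_trans; [apply Rsum_abs|]. eapply Rle_trans; [|apply (Hcol N)].
  apply sum_Rle. intros; apply Hab.
Qed.

(** With w the column sums, sum_n a_n (s x + 1 - s)^n = sum_m w_m x^m: expand
    each power by its row of B and sum by columns. *)
Lemma composed_series_by_columns s (a w : nat -> R) K x :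
  0 < s < 1 -> (forall n, Rabs (a n) <= K) ->
  (forall m, infinite_sum (fun n => a n * B s n m) (w m)) -> 0 < x < 1 ->
  exists S, infinite_sum (fun n => a n * (s * x + (1 - s)) ^ n) S /\
            infinite_sum (fun m => w m * x ^ m) S.
Proof.
  intros Hs Ha Hw Hx.
  set (q := s * x + (1 - s)).
  assert (Hq : 0 < q < 1) by (unfold q; nra).
  assert (Hrow : forall n, q ^ n = sum_f_R0 (fun m => B s n m * x ^ m) n)
    by (intro n; unfold q; symmetry; apply B_row; lia).
  destruct (nonneg_series_cv (fun n => Rabs (a n) * q ^ n) (K * / (1 - q))) as [R0 [HR0 _]].
  - intro; apply Rmult_le_pos; [apply Rabs_pos|apply pow_le; lra].
  - intro N. apply Rle_trans with (sum_f_R0 (fun n => K * q ^ n) N).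
    + apply sum_Rle. intros. apply Rmult_le_compat_r; [apply pow_le; lra|apply Ha].
    + replace (sum_f_R0 (fun n => K * q ^ n) N) with (K * sum_f_R0 (fun n => q ^ n) N)
        by (rewrite scal_sum; apply sum_eq; intros; ring).
      apply Rmult_le_compat_l; [|apply geom_bound; auto].
      eapply Rle_trans; [apply Rabs_pos|apply (Ha O)].
  - destruct (triangular_fubini (fun n m => a n * B s n m * x ^ m) (fun m => w m * x ^ m) R0)
      as [S [HS1 HS2]].
    + intros n m Hnm. rewrite B_zero by lia. ring.
    + apply (infinite_sum_ext (fun n => Rabs (a n) * q ^ n)); auto.
      intro n. rewrite Hrow, scal_sum.
      apply sum_eq. intros m _. rewrite !Rabs_mult.
      rewrite (Rabs_right (B s n m)) by (apply Rle_ge, B_nonneg; lra).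
      rewrite (Rabs_right (x ^ m)) by (apply Rle_ge, pow_le; lra). ring.
    + intro m. apply infinite_sum_scal, Hw.
    + exists S. split; [|exact HS2].
      apply (infinite_sum_ext (fun n => sum_f_R0 (fun m => a n * B s n m * x ^ m) n)); auto.
      intro n. rewrite Hrow, scal_sum. apply sum_eq. intros. ring.
Qed.

Lemma composition_coefficients s (a b : nat -> R) Ka Kb : 0 < s < 1 ->
  (forall n, Rabs (a n) <= Ka) -> (forall n, Rabs (b n) <= Kb) ->
  (forall x, 0 < x < 1 -> exists W, infinite_sum (fun n => a n * (s * x + (1 - s)) ^ n) W
       /\ infinite_sum (fun m => b m * x ^ m) W) ->
  forall m, infinite_sum (fun n => a n * B s n m) (b m).
Proof.
  intros Hs Ha Hb Hx.
  set (w := fun m => proj1_sig (column_cv s a Ka Hs Ha m)).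
  assert (Hw : forall m, infinite_sum (fun n => a n * B s n m) (w m) /\ Rabs (w m) <= Ka / s)
    by (intro m; exact (proj2_sig (column_cv s a Ka Hs Ha m))).
  assert (E : forall m, b m - w m = 0).
  { apply (ps_unique _ (Kb + Ka / s)).
    - intro n. destruct (Hw n) as [_ h]. pose proof (Hb n).
      unfold Rminus. eapply Rle_trans; [apply Rabs_triang|]. rewrite Rabs_Ropp. lra.
    - intros x Hx01. destruct (Hx x Hx01) as [W [H1 H2]].
      destruct (composed_series_by_columns s a w Ka x Hs Ha (fun m => proj1 (Hw m)) Hx01)
        as [S [HS1 HS2]].
      rewrite (uniqueness_sum _ _ _ HS1 H1) in HS2.
      rewrite <- (Rminus_diag W).
      apply (infinite_sum_ext (fun n => b n * x ^ n - w n * x ^ n)); [intro; ring|].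
      apply infinite_sum_minus; auto. }
  intro m. replace (b m) with (w m) by (specialize (E m); lra). apply Hw.
Qed.

Lemma adjoint_pairing_real s (a b g : nat -> R) L1 L2 : 0 < s < 1 ->
  infinite_sum (fun n => a n ^ 2) L1 -> infinite_sum (fun n => g n ^ 2) L2 ->
  (forall m, infinite_sum (fun n => a n * B s n m) (b m)) ->
  exists S, infinite_sum (fun m => b m * g m) S /\
            infinite_sum (fun n => a n * AdjR s g n) S.
Proof.
  intros Hs Ha Hg Hb.
  set (u := fun n m => a n * B s n m * g m).
  set (ag := fun m => Rabs (g m)).
  assert (Hrow : forall n, sum_f_R0 (fun m => Rabs (u n m)) n = Rabs (a n) * AdjR s ag n).
  { intro n. unfold AdjR. rewrite scal_sum. apply sum_eq. intros m _. unfold u, ag.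
    rewrite !Rabs_mult, (Rabs_right (B s n m)) by (apply Rle_ge, B_nonneg; lra). ring. }
  destruct (nonneg_series_cv (fun n => sum_f_R0 (fun m => Rabs (u n m)) n)
              ((L1 + / s * L2) / 2)) as [R0 [HR0 _]].
  { intro n. apply cond_pos_sum. intro; apply Rabs_pos. }
  { intro N. apply Rle_trans with (sum_f_R0 (fun n => (a n ^ 2 + AdjR s ag n ^ 2) / 2) N).
    - apply sum_Rle. intros n _. rewrite Hrow, <- (pow2_abs (a n)).
      pose proof (pow2_ge_0 (Rabs (a n) - AdjR s ag n)). nra.
    - replace (sum_f_R0 (fun n => (a n ^ 2 + AdjR s ag n ^ 2) / 2) N) with
        ((sum_f_R0 (fun n => a n ^ 2) N + sum_f_R0 (fun n => AdjR s ag n ^ 2) N) / 2)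
        by (rewrite <- plus_sum; unfold Rdiv; rewrite Rmult_comm, scal_sum;
            apply sum_eq; intros; ring).
      pose proof (AdjR_l2 s ag N Hs).
      replace (sum_f_R0 (fun m => ag m ^ 2) N) with (sum_f_R0 (fun m => g m ^ 2) N) in H
        by (apply sum_eq; intros; unfold ag; rewrite pow2_abs; reflexivity).
      pose proof (sum_incr _ N _ Ha (fun n => pow2_ge_0 (a n))).
      pose proof (sum_incr _ N _ Hg (fun n => pow2_ge_0 (g n))).
      assert (0 < / s) by (apply Rinv_0_lt_compat; lra).
      assert (/ s * sum_f_R0 (fun m => g m ^ 2) N <= / s * L2) by (apply Rmult_le_compat_l; lra).
      lra. }
  destruct (triangular_fubini u (fun m => b m * g m) R0) as [S [HS1 HS2]].
  - intros n m Hnm. unfold u. rewrite B_zero by lia. ring.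
  - exact HR0.
  - intro m. apply infinite_sum_scal, Hb.
  - exists S. split; [exact HS2|].
    apply (infinite_sum_ext (fun n => sum_f_R0 (fun m => u n m) n)); auto.
    intro n. unfold u, AdjR. rewrite scal_sum. apply sum_eq. intros; ring.
Qed.

Lemma Cx_eq (z w : Cx) : re z = re w -> im z = im w -> z = w.
Proof. destruct z, w; simpl; intros; subst; reflexivity. Qed.

Lemma Cnorm2_nonneg z : 0 <= Cnorm2 z.
Proof. unfold Cnorm2. nra. Qed.

Lemma coords_le_norm z : Rabs (re z) <= 1 + Cnorm2 z /\ Rabs (im z) <= 1 + Cnorm2 z.
Proof.
  assert (H : forall x y, Rabs x <= 1 + (x * x + y * y)).
  { intros x y. destruct (Rle_dec 0 x); [rewrite Rabs_right by lra|rewrite Rabs_left by lra];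
      nra. }
  unfold Cnorm2. split; [apply H|rewrite (Rplus_comm (re z * re z)); apply H].
Qed.

Lemma coeff_le_H2norm a l n : H2norm2_is a l -> Cnorm2 (a n) <= l.
Proof.
  intro H. eapply Rle_trans; [|apply (sum_incr (fun k => Cnorm2 (a k)) n l H)].
  - destruct n; [simpl; lra|]. rewrite tech5.
    pose proof (cond_pos_sum (fun n => Cnorm2 (a n)) n (fun k => Cnorm2_nonneg (a k))). lra.
  - intro; apply Cnorm2_nonneg.
Qed.

Lemma H2_parts_square_summable a la : H2norm2_is a la ->
  (exists L, infinite_sum (fun n => re (a n) ^ 2) L) /\
  (exists L, infinite_sum (fun n => im (a n) ^ 2) L).
Proof.
  intro H.
  assert (Hpart : forall p : nat -> R, (forall n, p n ^ 2 <= Cnorm2 (a n)) ->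
            exists L, infinite_sum (fun n => p n ^ 2) L).
  { intros p Hp. destruct (nonneg_series_cv (fun n => p n ^ 2) la) as [L [HL _]]; eauto.
    - intro; apply pow2_ge_0.
    - intro N. eapply Rle_trans; [|apply (sum_incr (fun n => Cnorm2 (a n)) N la H)].
      + apply sum_Rle. intros. apply Hp.
      + intro; apply Cnorm2_nonneg. }
  split; apply Hpart; intro n; unfold Cnorm2; nra.
Qed.

Lemma Cpow_RtoC x n : Cpow (RtoC x) n = RtoC (x ^ n).
Proof.
  induction n as [|n IH]; [reflexivity|]. simpl. rewrite IH.
  apply Cx_eq; unfold Cmul, RtoC; simpl; ring.
Qed.

Lemma phi_RtoC s x : phi s (RtoC x) = RtoC (s * x + (1 - s)).
Proof. apply Cx_eq; unfold phi, Cadd, Cmul, RtoC; simpl; ring. Qed.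

Lemma eval_real a x w : evalH2_is a (RtoC x) w ->
  infinite_sum (fun n => re (a n) * x ^ n) (re w) /\
  infinite_sum (fun n => im (a n) * x ^ n) (im w).
Proof.
  intros [H1 H2].
  split; (eapply infinite_sum_ext; [|eassumption]); intro n; cbv beta;
    rewrite Cpow_RtoC; unfold Cmul, RtoC; simpl; ring.
Qed.

Lemma coeffs_eq_of_eval_eq (a b : seqC) Ka Kb :
  (forall n, Cnorm2 (a n) <= Ka) -> (forall n, Cnorm2 (b n) <= Kb) ->
  (forall x, 0 < x < 1 -> exists w, evalH2_is a (RtoC x) w /\ evalH2_is b (RtoC x) w) ->
  forall n, a n = b n.
Proof.
  intros Ha Hb Hab.
  assert (Real : forall p : Cx -> R,
            (forall z, Rabs (p z) <= 1 + Cnorm2 z) ->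
            (forall c x w, evalH2_is c (RtoC x) w ->
                           infinite_sum (fun n => p (c n) * x ^ n) (p w)) ->
            forall n, p (a n) - p (b n) = 0).
  { intros p Hp Hev. apply (ps_unique _ ((1 + Ka) + (1 + Kb))).
    - intro n. unfold Rminus. eapply Rle_trans; [apply Rabs_triang|]. rewrite Rabs_Ropp.
      pose proof (Hp (a n)). pose proof (Hp (b n)). pose proof (Ha n). pose proof (Hb n). lra.
    - intros x Hx. destruct (Hab x Hx) as [w [Hwa Hwb]].
      rewrite <- (Rminus_diag (p w)).
      apply (infinite_sum_ext (fun n => p (a n) * x ^ n - p (b n) * x ^ n)); [intro; ring|].
      apply infinite_sum_minus; apply Hev; auto. }
  intro n. apply Cx_eq; apply Rminus_diag_uniq.
  - apply (Real re); [apply coords_le_norm|]. intros c x w Hw. apply (eval_real _ _ _ Hw).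
  - apply (Real im); [apply coords_le_norm|]. intros c x w Hw. apply (eval_real _ _ _ Hw).
Qed.

(** ** The adjoint of C_{phi_s} *)

Definition Adj (s : R) (c : seqC) (n : nat) : Cx :=
  mkC (AdjR s (fun m => re (c m)) n) (AdjR s (fun m => im (c m)) n).

Lemma Adj_l2 s c N : 0 < s < 1 ->
  sum_f_R0 (fun n => Cnorm2 (Adj s c n)) N <= / s * sum_f_R0 (fun m => Cnorm2 (c m)) N.
Proof.
  intro Hs. unfold Cnorm2, Adj; simpl.
  pose proof (AdjR_l2 s (fun m => re (c m)) N Hs).
  pose proof (AdjR_l2 s (fun m => im (c m)) N Hs).
  replace (sum_f_R0 (fun n => AdjR s (fun m => re (c m)) n * AdjR s (fun m => re (c m)) n
     + AdjR s (fun m => im (c m)) n * AdjR s (fun m => im (c m)) n) N) with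
    (sum_f_R0 (fun n => AdjR s (fun m => re (c m)) n ^ 2) N +
     sum_f_R0 (fun n => AdjR s (fun m => im (c m)) n ^ 2) N)
    by (rewrite <- plus_sum; apply sum_eq; intros; ring).
  replace (sum_f_R0 (fun m => re (c m) * re (c m) + im (c m) * im (c m)) N) with
    (sum_f_R0 (fun m => re (c m) ^ 2) N + sum_f_R0 (fun m => im (c m) ^ 2) N)
    by (rewrite <- plus_sum; apply sum_eq; intros; ring).
  lra.
Qed.

Lemma Adj_bounded s : 0 < s < 1 -> bounded_op (Adj s).
Proof.
  intro Hs.
  assert (Hs' : 0 <= / s) by (apply Rlt_le, Rinv_0_lt_compat; lra).
  assert (Hbound : forall a la N, H2norm2_is a la ->
            sum_f_R0 (fun n => Cnorm2 (Adj s a n)) N <= / s * la).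
  { intros a la N Ha. eapply Rle_trans; [apply Adj_l2; auto|].
    apply Rmult_le_compat_l; auto. apply sum_incr; auto. intro; apply Cnorm2_nonneg. }
  split; [|split; [|split]].
  - intros a [la Ha].
    destruct (nonneg_series_cv (fun n => Cnorm2 (Adj s a n)) (/ s * la)) as [l [Hl _]].
    + intro; apply Cnorm2_nonneg.
    + intro N. apply Hbound, Ha.
    + exists l. exact Hl.
  - intros a b _ _ n. apply Cx_eq; unfold Adj, AdjR, Cadd; simpl;
      rewrite <- plus_sum; apply sum_eq; intros; ring.
  - intros c a _ n. apply Cx_eq; unfold Adj, AdjR, Cmul; simpl;
      rewrite !scal_sum; try rewrite <- minus_sum; try rewrite <- plus_sum;
      apply sum_eq; intros; ring.
  - exists (/ s). intros a la lTa _ Ha HTa.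
    apply (lim_le _ _ _ HTa). intro N. apply Hbound, Ha.
Qed.

Lemma composition_columns s a b : 0 < s < 1 -> inH2 a -> compIs s a b ->
  (forall m, infinite_sum (fun n => re (a n) * B s n m) (re (b m))) /\
  (forall m, infinite_sum (fun n => im (a n) * B s n m) (im (b m))).
Proof.
  intros Hs [la Ha] [[lb Hb] Hcomp].
  assert (Hx : forall x, 0 < x < 1 -> exists w,
             evalH2_is b (RtoC x) w /\ evalH2_is a (RtoC (s * x + (1 - s))) w).
  { intros x Hx. destruct (Hcomp (RtoC x)) as [w [H1 H2]].
    - unfold Cnorm2, RtoC; simpl; nra.
    - rewrite phi_RtoC in H2. eauto. }
  assert (Bd : forall c l n, H2norm2_is c l ->
             Rabs (re (c n)) <= 1 + l /\ Rabs (im (c n)) <= 1 + l).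
  { intros c l n Hc. pose proof (coeff_le_H2norm c l n Hc). pose proof (coords_le_norm (c n)).
    lra. }
  split; apply (composition_coefficients s _ _ (1 + la) (1 + lb) Hs);
    try (intro n; apply (Bd _ _ n); assumption);
    intros x Hx01; destruct (Hx x Hx01) as [w [H1 H2]];
    apply eval_real in H1; apply eval_real in H2.
  - exists (re w). tauto.
  - exists (im w). tauto.
Qed.

(** Adj s is the Hilbert-space adjoint of C_{phi_s}: split the complex pairing
    into four real pairings and apply [adjoint_pairing_real] to each. *)
Lemma Adj_is_adjoint s : 0 < s < 1 -> is_comp_adjoint s (Adj s).
Proof.
  intro Hs. split; [apply Adj_bounded; auto|].
  intros a b c z Ha' Hc' Hcomp [Hz1 Hz2].
  destruct (composition_columns s a b Hs Ha' Hcomp) as [Cre Cim].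
  destruct Ha' as [la Ha]. destruct Hc' as [lc Hc].
  destruct (H2_parts_square_summable a la Ha) as [[L1 HL1] [L2 HL2]].
  destruct (H2_parts_square_summable c lc Hc) as [[L3 HL3] [L4 HL4]].
  destruct (adjoint_pairing_real s _ _ _ _ _ Hs HL1 HL3 Cre) as [S1 [P1 Q1]].
  destruct (adjoint_pairing_real s _ _ _ _ _ Hs HL2 HL4 Cim) as [S2 [P2 Q2]].
  destruct (adjoint_pairing_real s _ _ _ _ _ Hs HL2 HL3 Cim) as [S3 [P3 Q3]].
  destruct (adjoint_pairing_real s _ _ _ _ _ Hs HL1 HL4 Cre) as [S4 [P4 Q4]].
  assert (Ere : re z = S1 + S2).
  { apply (uniqueness_sum _ _ _ Hz1).
    eapply infinite_sum_ext; [|exact (infinite_sum_plus _ _ _ _ P1 P2)].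
    intro; unfold Cmul, Cconj; simpl; ring. }
  assert (Eim : im z = S3 - S4).
  { apply (uniqueness_sum _ _ _ Hz2).
    eapply infinite_sum_ext; [|exact (infinite_sum_minus _ _ _ _ P3 P4)].
    intro; unfold Cmul, Cconj; simpl; ring. }
  split; [rewrite Ere|rewrite Eim].
  - eapply infinite_sum_ext; [|exact (infinite_sum_plus _ _ _ _ Q1 Q2)].
    intro; unfold Cmul, Cconj, Adj; simpl; ring.
  - eapply infinite_sum_ext; [|exact (infinite_sum_minus _ _ _ _ Q3 Q4)].
    intro; unfold Cmul, Cconj, Adj; simpl; ring.
Qed.

(** ** Bounded operators are determined by their matrix *)

Definition basis (m : nat) : seqC := fun k => if Nat.eqb k m then Defs.C1 else Defs.C0.
Definition trunc (a : seqC) (N : nat) : seqC := fun k => if Nat.leb k N then a k else Defs.C0.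
Definition tail (a : seqC) (N : nat) : seqC := fun k => if Nat.leb k N then Defs.C0 else a k.

Lemma Cnorm2_C0 : Cnorm2 Defs.C0 = 0.
Proof. unfold Cnorm2, Defs.C0; simpl; ring. Qed.
Lemma Cmul_C1 z : Cmul z Defs.C1 = z.
Proof. apply Cx_eq; unfold Cmul, Defs.C1; simpl; ring. Qed.
Lemma Cmul_C0 z : Cmul z Defs.C0 = Defs.C0.
Proof. apply Cx_eq; unfold Cmul, Defs.C0; simpl; ring. Qed.
Lemma Cadd_C0 z : Cadd z Defs.C0 = z.
Proof. apply Cx_eq; unfold Cadd, Defs.C0; simpl; ring. Qed.
Lemma Cadd_C0l z : Cadd Defs.C0 z = z.
Proof. apply Cx_eq; unfold Cadd, Defs.C0; simpl; ring. Qed.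

Lemma finite_support_norm (f : seqC) N : (forall k, (N < k)%nat -> f k = Defs.C0) ->
  H2norm2_is f (sum_f_R0 (fun k => Cnorm2 (f k)) N).
Proof.
  intro H. apply (series_eventually_const _ _ N). intros K HK. apply sum_support; auto.
  intros m Hm. rewrite H by lia. apply Cnorm2_C0.
Qed.

Lemma finite_support_inH2 (f : seqC) N : (forall k, (N < k)%nat -> f k = Defs.C0) -> inH2 f.
Proof. intro H. eexists. apply (finite_support_norm f N H). Qed.

Lemma basis_norm m : H2norm2_is (basis m) 1.
Proof.
  eapply infinite_sum_ext; [|apply (series_single m 1)].
  intro n. unfold basis. destruct (Nat.eqb n m); unfold Cnorm2, Defs.C1, Defs.C0; simpl; ring.
Qed.

Lemma basis_inH2 m : inH2 (basis m).
Proof. exists 1. apply basis_norm. Qed.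

Lemma basis_sym m k : basis m k = basis k m.
Proof. unfold basis. rewrite Nat.eqb_sym. reflexivity. Qed.

Lemma Cmul_comm z w : Cmul z w = Cmul w z.
Proof. apply Cx_eq; unfold Cmul; simpl; ring. Qed.

Lemma Csum_ext (u v : seqC) w : (forall n, u n = v n) -> Csum u w -> Csum v w.
Proof.
  intros E [H1 H2].
  split; (eapply infinite_sum_ext; [|eassumption]); intro n; cbv beta; now rewrite E.
Qed.

Lemma Csum_unique (u : seqC) w1 w2 : Csum u w1 -> Csum u w2 -> w1 = w2.
Proof. intros [H1 H2] [H3 H4]. apply Cx_eq; eapply uniqueness_sum; eassumption. Qed.

Lemma Csum_single (u : seqC) p w :
  (forall m, m <> p -> u m = Defs.C0) -> u p = w -> Csum u w.
Proof.
  intros H <-. split; (eapply infinite_sum_ext; [|apply (series_single p)]); intro n; cbv beta;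
    destruct (Nat.eqb_spec n p); subst; try reflexivity; rewrite H by auto; reflexivity.
Qed.

Lemma T_trunc (T : seqC -> seqC) a p : bounded_op T -> forall N,
  re (T (trunc a N) p) = sum_f_R0 (fun m => re (Cmul (a m) (T (basis m) p))) N /\
  im (T (trunc a N) p) = sum_f_R0 (fun m => im (Cmul (a m) (T (basis m) p))) N.
Proof.
  intros [_ [Hadd [Hhom _]]] N. induction N as [|N IH].
  - assert (E : trunc a 0 = fun k => Cmul (a O) (basis O k)).
    { apply functional_extensionality. intro k. unfold trunc, basis.
      destruct k; simpl; [rewrite Cmul_C1|rewrite Cmul_C0]; reflexivity. }
    rewrite E, Hhom by apply basis_inH2. simpl. split; reflexivity.
  - assert (E : trunc a (S N) = fun k => Cadd (trunc a N k) (Cmul (a (S N)) (basis (S N) k))).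
    { apply functional_extensionality. intro k. unfold trunc, basis.
      destruct (Nat.leb_spec k N); destruct (Nat.leb_spec k (S N));
        destruct (Nat.eqb_spec k (S N));
        try lia; subst; rewrite ?Cmul_C0, ?Cmul_C1, ?Cadd_C0, ?Cadd_C0l; reflexivity. }
    rewrite E, Hadd.
    + rewrite Hhom by apply basis_inH2. destruct IH as [H1 H2].
      split; [rewrite tech5, <- H1|rewrite tech5, <- H2]; reflexivity.
    + apply (finite_support_inH2 _ N). intros k Hk. unfold trunc.
      destruct (Nat.leb_spec k N); [lia|reflexivity].
    + apply (finite_support_inH2 _ (S N)). intros k Hk. unfold basis.
      destruct (Nat.eqb_spec k (S N)); [lia|]. apply Cmul_C0.
Qed.

Lemma tail_norm a la N : H2norm2_is a la ->
  H2norm2_is (tail a N) (la - sum_f_R0 (fun k => Cnorm2 (a k)) N).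
Proof.
  intro Ha.
  set (h := fun k => if Nat.leb k N then Cnorm2 (a k) else 0).
  eapply infinite_sum_ext; [|apply (infinite_sum_minus _ h _ _ Ha)].
  - intro k. unfold tail, h. destruct (Nat.leb k N); [rewrite Cnorm2_C0; ring|ring].
  - apply (series_eventually_const _ _ N). intros K HK. rewrite (sum_support h N K); auto.
    + apply sum_eq. intros i Hi. unfold h. destruct (Nat.leb_spec i N); [reflexivity|lia].
    + intros m Hm. unfold h. destruct (Nat.leb_spec m N); [lia|reflexivity].
Qed.

Lemma T_split_trunc_tail (T : seqC -> seqC) a la N : bounded_op T -> H2norm2_is a la ->
  forall p, T a p = Cadd (T (trunc a N) p) (T (tail a N) p).
Proof.
  intros [_ [Hadd _]] Ha p. rewrite <- Hadd.
  - f_equal. apply functional_extensionality. intro k. unfold trunc, tail.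
    destruct (Nat.leb k N); [rewrite Cadd_C0|rewrite Cadd_C0l]; reflexivity.
  - apply (finite_support_inH2 _ N). intros k Hk. unfold trunc.
    destruct (Nat.leb_spec k N); [lia|reflexivity].
  - eexists. apply (tail_norm a la N Ha).
Qed.

Lemma T_tail_estimate (T : seqC -> seqC) M a la p N :
  (forall a, inH2 a -> inH2 (T a)) ->
  (forall a la lTa, inH2 a -> H2norm2_is a la -> H2norm2_is (T a) lTa -> lTa <= M * la) ->
  H2norm2_is a la ->
  Cnorm2 (T (tail a N) p) <= Rabs M * (la - sum_f_R0 (fun k => Cnorm2 (a k)) N).
Proof.
  intros Hin HM Ha.
  pose proof (tail_norm a la N Ha) as Htn.
  destruct (Hin _ (ex_intro _ _ Htn)) as [l Hl].
  pose proof (HM _ _ _ (ex_intro _ _ Htn) Htn Hl).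
  pose proof (coeff_le_H2norm _ _ p Hl).
  pose proof (sum_incr (fun k => Cnorm2 (a k)) N la Ha (fun k => Cnorm2_nonneg _)).
  assert (M * (la - sum_f_R0 (fun k => Cnorm2 (a k)) N)
          <= Rabs M * (la - sum_f_R0 (fun k => Cnorm2 (a k)) N))
    by (apply Rmult_le_compat_r; [lra|apply Rle_abs]).
  lra.
Qed.

Lemma cv_of_sq_bound (f S : nat -> R) g l C : 0 <= C -> Un_cv S l ->
  (forall N, (g - f N) ^ 2 <= C * (l - S N)) -> Un_cv f g.
Proof.
  intros HC HS Hf eps He.
  destruct (HS (eps ^ 2 / (C + 1))) as [N0 HN0].
  { apply Rdiv_lt_0_compat; nra. }
  exists N0. intros n Hn. specialize (HN0 n Hn). specialize (Hf n).
  unfold Rdist in *. apply Rabs_def2 in HN0.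
  assert (Hlt : (g - f n) ^ 2 < eps ^ 2).
  { assert (C * (l - S n) <= C * (eps ^ 2 / (C + 1))) by (apply Rmult_le_compat_l; lra).
    assert (C * (eps ^ 2 / (C + 1)) < eps ^ 2).
    { apply Rmult_lt_reg_r with (C + 1); [lra|].
      replace (C * (eps ^ 2 / (C + 1)) * (C + 1)) with (C * eps ^ 2) by (field; lra). nra. }
    lra. }
  rewrite Rabs_minus_sym, <- (Rabs_right eps) by lra. apply Rsqr_lt_abs_0.
  unfold Rsqr. simpl in Hlt. lra.
Qed.

Lemma bounded_op_matrix (T : seqC -> seqC) a p : bounded_op T -> inH2 a ->
  Csum (fun m => Cmul (a m) (T (basis m) p)) (T a p).
Proof.
  intros HT [la Ha]. pose proof HT as [Hin [_ [_ [M HM]]]].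
  assert (Key : forall (part : Cx -> R),
            (forall z w, part (Cadd z w) = part z + part w) ->
            (forall z, part z ^ 2 <= Cnorm2 z) ->
            (forall N, part (T (trunc a N) p) =
                       sum_f_R0 (fun m => part (Cmul (a m) (T (basis m) p))) N) ->
            infinite_sum (fun m => part (Cmul (a m) (T (basis m) p))) (part (T a p))).
  { intros part Hadd Hsq Htr eps He.
    destruct (cv_of_sq_bound (fun N => part (T (trunc a N) p))
                (sum_f_R0 (fun k => Cnorm2 (a k))) (part (T a p)) la (Rabs M)
                (Rabs_pos M) Ha) with eps as [N HN]; auto.
    - intro N. rewrite (T_split_trunc_tail T a la N HT Ha p), Hadd.
      replace (part (T (trunc a N) p) + part (T (tail a N) p) - part (T (trunc a N) p))
        with (part (T (tail a N) p)) by ring.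
      eapply Rle_trans; [apply Hsq|]. apply (T_tail_estimate T M a la p N Hin HM Ha).
    - exists N. intros n Hn. rewrite <- Htr. apply HN; auto. }
  split; apply Key; intros; unfold Cadd, Cnorm2; simpl; try nra.
  - apply (proj1 (T_trunc T a p HT N)).
  - apply (proj2 (T_trunc T a p HT N)).
Qed.

Definition kernel (t : R) : seqC := fun n => RtoC (t ^ n).

Lemma kernel_inH2 t : 0 < t < 1 -> inH2 (kernel t).
Proof.
  intro Ht.
  destruct (nonneg_series_cv (fun n => Cnorm2 (kernel t n)) (/ (1 - t ^ 2))) as [l [Hl _]].
  - intro; apply Cnorm2_nonneg.
  - intro N. eapply Rle_trans; [|apply (geom_bound (t ^ 2) N); nra].
    right. apply sum_eq. intros i _. unfold Cnorm2, kernel, RtoC; cbn [re im].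
    rewrite <- pow_mult. replace (2 * i)%nat with (i + i)%nat by lia. rewrite pow_add. ring.
  - exists l. exact Hl.
Qed.

Lemma eval_monomial c p z :
  evalH2_is (fun n => Cmul c (basis p n)) z (Cmul c (Cpow z p)).
Proof.
  apply (Csum_single _ p).
  - intros m Hm. unfold basis. destruct (Nat.eqb_spec m p); [contradiction|].
    rewrite Cmul_C0, Cmul_comm. apply Cmul_C0.
  - unfold basis. rewrite Nat.eqb_refl, Cmul_C1. reflexivity.
Qed.

Lemma monomial_coeff_bound c p n : Cnorm2 (Cmul c (basis p n)) <= Cnorm2 c.
Proof.
  unfold basis. destruct (Nat.eqb n p); [rewrite Cmul_C1; lra|].
  rewrite Cmul_C0, Cnorm2_C0. apply Cnorm2_nonneg.
Qed.

Lemma compIs_one s : compIs s (basis 0) (basis 0).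
Proof.
  assert (E : forall z, evalH2_is (basis 0) z Defs.C1).
  { intro z. apply (Csum_single _ 0).
    - intros m Hm. unfold basis. destruct (Nat.eqb_spec m 0); [contradiction|]. apply Cx_eq;
        unfold Cmul, Defs.C0; simpl; ring.
    - apply Cx_eq; unfold basis, Cmul, Defs.C1; simpl; ring. }
  split; [apply basis_inH2|]. intros z _. exists Defs.C1. split; apply E.
Qed.

Lemma eval_at_0 g w : evalH2_is g Defs.C0 w -> w = g O.
Proof.
  intro H. apply (Csum_unique _ _ _ H). apply (Csum_single _ 0).
  - intros [|m] Hm; [contradiction|]. apply Cx_eq; unfold Cmul, Defs.C0; simpl; ring.
  - apply Cx_eq; unfold Cmul, Defs.C1; simpl; ring.
Qed.

Lemma Adj_supported_at_0 s c : (forall m, (0 < m)%nat -> c m = Defs.C0) ->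
  forall n, Adj s c n = Cmul (c O) (RtoC ((1 - s) ^ n)).
Proof.
  intros H n. unfold Adj.
  rewrite !AdjR_supported_at_0 by (intros m Hm; rewrite H by exact Hm; reflexivity).
  apply Cx_eq; unfold Cmul, RtoC; simpl; ring.
Qed.

(** ** The commutant *)

Section Commutant.

Variable T : seqC -> seqC.
Hypothesis T_bounded : bounded_op T.
Hypothesis T_commutes : forall s, 0 < s < 1 -> commutes_comp s T.
Hypothesis T_commutes_adj : forall s A, 0 < s < 1 -> is_comp_adjoint s A -> commutes_op T A.

Local Notation lam := (T (basis 0) O).

(** Step 1: T 1 is the constant lam, since (T 1)(1-s) = (T 1)(phi_s 0) = (T 1)(0). *)
Lemma T_one n : T (basis 0) n = Cmul lam (basis 0 n).
Proof.
  destruct (proj1 T_bounded _ (basis_inH2 0)) as [l Hl].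
  apply (coeffs_eq_of_eval_eq (T (basis 0)) (fun k => Cmul lam (basis 0 k)) l (Cnorm2 lam)).
  - intro k. apply (coeff_le_H2norm _ _ k Hl).
  - intro k. apply monomial_coeff_bound.
  - intros x Hx. exists lam. split.
    + assert (Hs : 0 < 1 - x < 1) by lra.
      destruct (T_commutes _ Hs _ _ (basis_inH2 0) (compIs_one _)) as [_ Hcomp].
      destruct (Hcomp Defs.C0) as [w [H0 Hx']]; [rewrite Cnorm2_C0; lra|].
      rewrite (eval_at_0 _ _ H0) in Hx'.
      replace (phi (1 - x) Defs.C0) with (RtoC x) in Hx'
        by (apply Cx_eq; unfold phi, Cadd, Cmul, RtoC, Defs.C0; simpl; ring).
      exact Hx'.
    + pose proof (eval_monomial lam 0 (RtoC x)) as H. simpl Cpow in H.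
      rewrite Cmul_C1 in H. exact H.
Qed.

(** Step 2: k_t = Adj_{1-t} 1, hence T k_t = Adj_{1-t} (T 1) = lam k_t. *)
Lemma T_kernel t p : 0 < t < 1 -> T (kernel t) p = Cmul lam (kernel t p).
Proof.
  intro Ht. assert (Hs : 0 < 1 - t < 1) by lra.
  assert (Hsupp : forall c, (forall m, (0 < m)%nat -> c m = Defs.C0) ->
            forall n, Adj (1 - t) c n = Cmul (c O) (kernel t n)).
  { intros c Hc n. rewrite Adj_supported_at_0 by exact Hc.
    unfold kernel. do 3 f_equal. ring. }
  assert (Hk : kernel t = Adj (1 - t) (basis 0)).
  { apply functional_extensionality. intro n. rewrite Hsupp.
    - unfold basis. simpl. rewrite Cmul_comm, Cmul_C1. reflexivity.
    - intros [|m] Hm; [lia|reflexivity]. }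
  rewrite Hk at 1. rewrite (T_commutes_adj _ _ Hs (Adj_is_adjoint _ Hs) _ (basis_inH2 0) p), Hsupp; [auto|].
  intros [|m] Hm; [lia|]. rewrite T_one. apply Cmul_C0.
Qed.

(** Step 3: expanding T k_t along the basis gives sum_m t^m (T e_m)_p = lam t^p
    on (0,1), hence (T e_m)_p = lam [m = p]. *)
Lemma T_basis m p : T (basis m) p = Cmul lam (basis m p).
Proof.
  pose proof T_bounded as [Hin [_ [_ [M HM]]]].
  rewrite basis_sym. revert m.
  apply (coeffs_eq_of_eval_eq (fun m => T (basis m) p) (fun m => Cmul lam (basis p m))
           M (Cnorm2 lam)).
  - intro m. destruct (Hin _ (basis_inH2 m)) as [l Hl].
    pose proof (HM _ _ _ (basis_inH2 m) (basis_norm m) Hl).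
    pose proof (coeff_le_H2norm _ _ p Hl). lra.
  - intro m. apply monomial_coeff_bound.
  - intros t Ht. exists (Cmul lam (kernel t p)). split.
    + rewrite <- T_kernel by exact Ht.
      apply (Csum_ext (fun m => Cmul (kernel t m) (T (basis m) p))).
      { intro m. unfold kernel. rewrite Cpow_RtoC. apply Cmul_comm. }
      apply bounded_op_matrix; [exact T_bounded|]. apply kernel_inH2, Ht.
    + unfold kernel. rewrite <- Cpow_RtoC. apply eval_monomial.
Qed.

(** Step 4: the matrix of T is lam times the identity, hence T = lam. *)
Lemma T_scalar a : inH2 a -> forall p, T a p = Cmul lam (a p).
Proof.
  intros Ha p. symmetry. apply (Csum_unique (fun m => Cmul (a m) (T (basis m) p))).
  - apply (Csum_single _ p).
    + intros m Hm. rewrite T_basis. unfold basis.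
      destruct (Nat.eqb_spec p m); [congruence|]. rewrite !Cmul_C0. reflexivity.
    + rewrite T_basis. unfold basis. rewrite Nat.eqb_refl, Cmul_C1. apply Cmul_comm.
  - apply bounded_op_matrix; assumption.
Qed.

End Commutant.

Theorem mainTheorem19 :
  forall T : seqC -> seqC,
    bounded_op T ->
    (forall s, 0 < s < 1 -> commutes_comp s T) ->
    (forall s A, 0 < s < 1 -> is_comp_adjoint s A -> commutes_op T A) ->
    exists lam : Cx, forall a, inH2 a -> forall n, T a n = Cmul lam (a n).
Proof.
  intros T HT Hcomp Hadj. exists (T (basis 0) O).
  exact (T_scalar T HT Hcomp Hadj).
Qed.
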